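(* If a set $C\subseteq\mathbb{R}^n$ is smoothly approximately convex at $\bar x\in C$, then it is uniformly approximable by geodesics (UAG) at $\bar x$. If moreover $C$ is locally closed at $\bar x$, then $C$ is super-regular and Clarke regular at $\bar x$.
   Context: $C$ is smoothly approximately convex at $\bar x$ if for every $\epsilon>0$ there is a neighborhood $W$ of $\bar x$ such that for all $x,x'\in C\cap W$ there is a map $\gamma:[0,1]\to C$, extending to a $\mathcal{C}^{(1)}$ map on an open neighborhood of $[0,1]$, with $\gamma(0)=x,\gamma(1)=x'$ and $\|\gamma'(t)-(x'-x)\|\le\epsilon\|x'-x\|$ for all $t$. $C$ is UAG at $\bar x$ if for every $\epsilon>0$ there is a neighborhood $W$ of $\bar x$ such that for all distinct $x,x'\in C\cap W$ there exist $\gamma:[0,1]\to C$ and $d\in\mathbb{R}^n\setminus\{0\}$ with $\gamma(0)=x$, $\gamma(1)=x'$ and $\|\gamma(t)-(x+td)\|\le\epsilon t\|d\|$ for all $t\in[0,1]$. $C$ is locally closed at $\bar x$ if $C\cap\overline B$ is closed for some closed ball $\overline B$ centered at $\bar x$. Regular normal cone: $\widehat N_C(\bar x)=\{v:\langle v,x-\bar x\rangle\le o(\|x-\bar x\|),\ x\in C\}$; normal cone $N_C(\bar x)$: all limits of $v_k\in\widehat N_C(x_k)$ with $x_k\in C$, $x_k\to\bar x$. $C$ is Clarke regular at $\bar x$ if it is locally closed there and $N_C(\bar x)=\widehat N_C(\bar x)$. $C$ is super-regular at $\bar x$ if it is locally closed there and for every $\epsilon>0$ there is a neighborhood $W$ of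 $\bar x$ with $\langle v,x'-x\rangle\le\epsilon\|v\|\|x'-x\|$ for all $x,x'\in C\cap W$ and $v\in N_C(x)$. *)

From HB Require Import structures.
From mathcomp Require Import all_boot all_order all_algebra.
From mathcomp Require Import all_classical all_reals all_analysis.
Set Implicit Arguments. Unset Strict Implicit. Unset Printing Implicit Defensive.
Import Order.TTheory GRing.Theory Num.Theory.
Import numFieldNormedType.Exports.
Local Open Scope classical_set_scope.
Local Open Scope ring_scope.

Section Defs.
Variables (R : realType) (n : nat).
Local Notation V := 'rV[R]_n.

Definition dotv (u v : V) : R := \sum_(i < n) u ord0 i * v ord0 i.
Definition enorm (u : V) : R := Num.sqrt (dotv u u).

Definition smoothly_approx_convex (C : set V) (xbar : V) : Prop :=
  forall eps : R, 0 < eps -> exists W : set V, nbhs xbar W /\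
    forall x x' : V, C x -> W x -> C x' -> W x' ->
    exists (gamma : R -> V) (U : set R),
      [/\ open U, `[0, 1]%classic `<=` U,
          (forall t, U t -> derivable gamma t 1),
          (forall t, U t -> {for t, continuous (fun s => 'D_1 gamma s)}) &
        [/\ (forall t, `[0, 1]%classic t -> C (gamma t)),
          gamma 0 = x, gamma 1 = x' &
          forall t, `[0, 1]%classic t ->
            enorm ('D_1 gamma t - (x' - x)) <= eps * enorm (x' - x)]].

Definition UAG (C : set V) (xbar : V) : Prop :=
  forall eps : R, 0 < eps -> exists W : set V, nbhs xbar W /\
    forall x x' : V, C x -> W x -> C x' -> W x' -> x != x' ->
    exists (gamma : R -> V) (d : V),
      [/\ d != 0,
          (forall t, `[0, 1]%classic t -> C (gamma t)),
          gamma 0 = x, gamma 1 = x' &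
          forall t, `[0, 1]%classic t ->
            enorm (gamma t - (x + t *: d)) <= eps * t * enorm d].

Definition locally_closed (C : set V) (xbar : V) : Prop :=
  exists r : R, 0 < r /\ closed (C `&` [set y | enorm (y - xbar) <= r]).

Definition regular_normal (C : set V) (xbar v : V) : Prop :=
  forall eps : R, 0 < eps -> exists delta : R, 0 < delta /\
    forall x, C x -> enorm (x - xbar) < delta ->
      dotv v (x - xbar) <= eps * enorm (x - xbar).

Definition limiting_normal (C : set V) (xbar v : V) : Prop :=
  exists (xs vs : nat -> V),
    [/\ (forall k, C (xs k)), (forall k, regular_normal C (xs k) (vs k)),
        xs @ \oo --> xbar & vs @ \oo --> v].

Definition clarke_regular (C : set V) (xbar : V) : Prop :=
  locally_closed C xbar /\
  (forall v, limiting_normal C xbar v <-> regular_normal C xbar v).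

Definition super_regular (C : set V) (xbar : V) : Prop :=
  locally_closed C xbar /\
  forall eps : R, 0 < eps -> exists W : set V, nbhs xbar W /\
    forall x x' v : V, C x -> W x -> C x' -> W x' -> limiting_normal C x v ->
      dotv v (x' - x) <= eps * enorm v * enorm (x' - x).

End Defs.

(* Smooth approximate convexity provides curves gamma in C from x to x' whose velocity
   stays within eps |x' - x| of x' - x; by the mean value theorem such a curve stays within
   eps t |x' - x| of the segment, which is UAG.  Moving along it from x for a short time t,
   a regular normal v at x gives <v, gamma t - x> <= o(t), whence
   <v, x' - x> <= eps |v| |x' - x|.  This inequality survives limits of regular normals,
   so C is super-regular, and taking x = xbar in it shows that every limiting normal at
   xbar is regular, i.e. C is Clarke regular. *)

From HB Require Import structures.
From mathcomp Require Import all_boot all_order all_algebra.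
From mathcomp Require Import all_classical all_reals all_analysis.
From mathcomp Require Import ring lra.
Import Order.TTheory GRing.Theory Num.Theory.
Import numFieldNormedType.Exports.
Local Open Scope classical_set_scope.
Local Open Scope ring_scope.

Section Euclidean.
Context {R : realType} {n : nat}.
Local Notation V := 'rV[R]_n.
Implicit Types u v w : V.

Lemma dotvC u v : dotv u v = dotv v u.
Proof. by apply: eq_bigr => i _; rewrite mulrC. Qed.

Lemma dotvDr u v w : dotv u (v + w) = dotv u v + dotv u w.
Proof. by rewrite /dotv -big_split; apply: eq_bigr => i _; rewrite !mxE mulrDr. Qed.

Lemma dotvNr u v : dotv u (- v) = - dotv u v.
Proof. by rewrite /dotv -sumrN; apply: eq_bigr => i _; rewrite !mxE mulrN. Qed.

Lemma dotvBr u v w : dotv u (v - w) = dotv u v - dotv u w.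
Proof. by rewrite dotvDr dotvNr. Qed.

Lemma dotvZr u k v : dotv u (k *: v) = k * dotv u v.
Proof. by rewrite /dotv mulr_sumr; apply: eq_bigr => i _; rewrite !mxE mulrCA. Qed.

Lemma dotvDl u v w : dotv (v + w) u = dotv v u + dotv w u.
Proof. by rewrite dotvC dotvDr -!(dotvC u). Qed.

Lemma dotvNl u v : dotv (- v) u = - dotv v u.
Proof. by rewrite dotvC dotvNr dotvC. Qed.

Lemma dotvBl u v w : dotv (v - w) u = dotv v u - dotv w u.
Proof. by rewrite dotvDl dotvNl. Qed.

Lemma dotvZl u k v : dotv (k *: v) u = k * dotv v u.
Proof. by rewrite dotvC dotvZr dotvC. Qed.

Lemma dotv0r u : dotv u 0 = 0.
Proof. by rewrite /dotv big1 // => i _; rewrite mxE mulr0. Qed.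

Lemma dotvv_ge0 u : 0 <= dotv u u.
Proof. by apply: sumr_ge0 => i _; rewrite -expr2 sqr_ge0. Qed.

Lemma dotvv_eq0 u : dotv u u = 0 -> u = 0.
Proof.
have sq_ge0 j : true -> 0 <= u ord0 j * u ord0 j by rewrite -expr2 sqr_ge0.
move=> /(psumr_eq0P sq_ge0) u0; apply/rowP => i; rewrite mxE.
by have /eqP := u0 i isT; rewrite mulf_eq0 orbb => /eqP.
Qed.

Lemma enorm_ge0 u : 0 <= enorm u.
Proof. exact: sqrtr_ge0. Qed.

Lemma enorm_sq u : enorm u ^+ 2 = dotv u u.
Proof. by rewrite sqr_sqrtr // dotvv_ge0. Qed.

Lemma enorm_eq0 u : enorm u = 0 -> u = 0.
Proof. by move=> u0; apply: dotvv_eq0; rewrite -enorm_sq u0 expr0n. Qed.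

Lemma enormN u : enorm (- u) = enorm u.
Proof. by rewrite /enorm dotvNl dotvNr opprK. Qed.

Lemma enormZ k u : enorm (k *: u) = `|k| * enorm u.
Proof.
by rewrite /enorm dotvZl dotvZr mulrA -expr2 sqrtrM ?sqr_ge0 // sqrtr_sqr.
Qed.

Lemma cauchy_schwarz u v : dotv u v <= enorm u * enorm v.
Proof.
have [/enorm_eq0 -> | a0] := eqVneq (enorm u) 0.
  by rewrite dotvC dotv0r mulr_ge0 ?enorm_ge0.
have [/enorm_eq0 -> | b0] := eqVneq (enorm v) 0.
  by rewrite dotv0r mulr_ge0 ?enorm_ge0.
have ha : 0 < enorm u by rewrite lt_def a0 enorm_ge0.
have hb : 0 < enorm v by rewrite lt_def b0 enorm_ge0.
(* expand  0 <= |b u - a v|^2 = 2 a b (a b - <u, v>)  with a = |u|, b = |v| *)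
have := dotvv_ge0 (enorm v *: u - enorm u *: v).
rewrite !dotvBl !dotvBr !dotvZl !dotvZr (dotvC v u) -!enorm_sq.
have hab : 0 < enorm u * enorm v by rewrite mulr_gt0.
move=> expansion_ge0; rewrite -subr_ge0 -(pmulr_rge0 _ hab); nra.
Qed.

Lemma enormD u v : enorm (u + v) <= enorm u + enorm v.
Proof.
have : enorm (u + v) ^+ 2 <= (enorm u + enorm v) ^+ 2.
  rewrite enorm_sq dotvDl !dotvDr (dotvC v u) sqrrD -!enorm_sq.
  have := cauchy_schwarz u v; lra.
have := enorm_ge0 (u + v); have := enorm_ge0 u; have := enorm_ge0 v.
nra.
Qed.

Lemma mx_norm_le_enorm u : `|u| <= enorm u.
Proof.
rewrite /Num.Def.normr /= mx_normrE.
apply: bigmax_le => [|[i j] _ /=]; first exact: enorm_ge0.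
rewrite (ord1 i) -sqrtr_sqr ler_wsqrtr // /dotv (bigD1 j) //= -expr2 lerDl.
by apply: sumr_ge0 => k _; rewrite -expr2 sqr_ge0.
Qed.

End Euclidean.

Section Calculus.
Context {R : realType} {n : nat}.
Local Notation V := 'rV[R]_n.

Lemma cvg_dotv {T : Type} {F : set_system T} {FF : Filter F} {f g : T -> V} {a b : V} :
  f @ F --> a -> g @ F --> b -> (fun k => dotv (f k) (g k)) @ F --> dotv a b.
Proof.
move=> fa gb; apply: (@cvg_big R _ +%R 0 xpredT add_continuous) => // i _.
have coord_cvg (h : T -> V) (c : V) : h @ F --> c -> (fun k => h k ord0 i) @ F --> c ord0 i.
  exact: continuous_cvg (@coord_continuous R 1 n ord0 i c).
exact: cvgM (coord_cvg _ _ fa) (coord_cvg _ _ gb).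
Qed.

Lemma cvg_enorm {T : Type} {F : set_system T} {FF : Filter F} {f : T -> V} {a : V} :
  f @ F --> a -> (fun k => enorm (f k)) @ F --> enorm a.
Proof. by move=> fa; exact: continuous_cvg (@sqrt_continuous R _) (cvg_dotv fa fa). Qed.

Lemma is_derive_dotv (w : V) {f : R -> V} {s : R} {df : V} :
  is_derive s 1 f df -> is_derive s 1 (fun t => dotv w (f t)) (dotv w df).
Proof.
move=> [df_ex df_val].
have -> : (fun t => dotv w (f t)) = \sum_(i < n) (fun t => w ord0 i * f t ord0 i).
  by apply/funext => t; rewrite fct_sumE.
have -> : dotv w df = \sum_(i < n) w ord0 i *: 'D_1 (fun t => f t ord0 i) s.
  by rewrite -df_val /dotv (derive_mx df_ex); apply: eq_bigr => i _; rewrite mxE.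
apply: is_derive_sum => i; apply: is_deriveZ; apply: derivableP.
by move/derivable_mxP: df_ex; apply.
Qed.

Lemma segment_deviation_le {gamma : R -> V} {d : V} {c : R} :
  (forall t, `[0, 1]%classic t -> derivable gamma t 1) ->
  (forall t, `[0, 1]%classic t -> enorm ('D_1 gamma t - d) <= c) ->
  forall t, `[0, 1]%classic t -> enorm (gamma t - (gamma 0 + t *: d)) <= c * t.
Proof.
move=> dgamma gamma'_near_d t t01.
have /andP[t_ge0 t_le1] : (0 <= t) && (t <= 1) by move: t01; rewrite /= in_itv.
have c_ge0 : 0 <= c := le_trans (enorm_ge0 _) (gamma'_near_d t t01).
have sub01 s : s \in `[0, t] -> `[0, 1]%classic s.
  by rewrite /= !in_itv /= => /andP[-> /le_trans->].
set w := gamma t - (gamma 0 + t *: d).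
(* mean value theorem for  phi s = <w, gamma s - s d>, whose increment on [0, t] is |w|^2 *)
pose phi : R -> R := (fun s => dotv w (gamma s)) - dotv w d \*: id.
pose dphi (s : R) := dotv w ('D_1 gamma s - d).
have phi' (s : R) : `[0, 1]%classic s -> is_derive s 1 phi (dphi s).
  move=> s01; have dg := is_derive_dotv w (derivableP (dgamma s s01)).
  apply: is_derive_eq (is_deriveB dg (is_deriveZ (dotv w d) (is_derive_id s 1))) _.
  by rewrite scaler1 /dphi dotvBr.
have phi_cont : {within `[0, t], continuous phi}.
  apply: continuous_in_subspaceT => s /[!inE] /sub01 /phi' [dphi_ex _].
  exact/differentiable_continuous/derivable1_diffP.
have [r /sub01 r01 phi_incr] := MVT_segment t_ge0
  (fun s s0t => phi' s (sub01 s (subset_itv_oo_cc s0t))) phi_cont.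
have phi_incr_eq : phi t - phi 0 = enorm w ^+ 2.
  rewrite enorm_sq /phi !fctE /= scaler0 subr0.
  change (dotv w d *: t) with (dotv w d * t).
  by rewrite /w !(dotvBr, dotvDr, dotvZr); ring.
have dphi_le : dphi r <= enorm w * c.
  exact: le_trans (cauchy_schwarz _ _) (ler_wpM2l (enorm_ge0 _) (gamma'_near_d r r01)).
have w_ge0 := enorm_ge0 w; have ct_ge0 : 0 <= c * t by rewrite mulr_ge0.
move: phi_incr; rewrite phi_incr_eq subr0; nra.
Qed.

End Calculus.

Section NormalCones.
Context {R : realType} {n : nat}.
Local Notation V := 'rV[R]_n.
Implicit Types (C W : set V) (x v : V) (eps : R).

Definition approx_geodesic C eps x x' (gamma : R -> V) : Prop :=
  [/\ forall t, `[0, 1]%classic t -> C (gamma t), gamma 0 = x, gamma 1 = x' &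
      forall t, `[0, 1]%classic t ->
        enorm (gamma t - (x + t *: (x' - x))) <= eps * t * enorm (x' - x)].

Definition eps_obtuse_on (normal : V -> V -> Prop) C W eps : Prop :=
  forall x x' v, C x -> W x -> C x' -> W x' -> normal x v ->
    dotv v (x' - x) <= eps * enorm v * enorm (x' - x).

Lemma smoothly_approx_convex_geodesic C xbar :
  smoothly_approx_convex C xbar ->
  forall eps, 0 < eps -> exists W, nbhs xbar W /\
    forall x x', C x -> W x -> C x' -> W x' ->
      exists gamma, approx_geodesic C eps x x' gamma.
Proof.
move=> sac eps eps_gt0; have [W [xbarW near_segment]] := sac eps eps_gt0.
exists W; split => // x x' Cx Wx Cx' Wx'.
have [gamma [U [_ sub01U dgamma _ [Cgamma g0 g1 gamma'_near]]]] :=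
  near_segment x x' Cx Wx Cx' Wx'.
exists gamma; split => // t t01; rewrite mulrAC -{1}g0.
by apply: segment_deviation_le t01 => // s /sub01U /dgamma.
Qed.

Lemma smoothly_approx_convex_UAG C xbar :
  smoothly_approx_convex C xbar -> UAG C xbar.
Proof.
move=> /smoothly_approx_convex_geodesic sac eps eps_gt0.
have [W [xbarW geodesic]] := sac eps eps_gt0.
exists W; split => // x x' Cx Wx Cx' Wx' xx'.
have [gamma [Cgamma g0 g1 near_segment]] := geodesic x x' Cx Wx Cx' Wx'.
by exists gamma, (x' - x); split; rewrite // subr_eq0 eq_sym.
Qed.

Lemma regular_normal_geodesic_le {C eps x x' v gamma} :
  0 <= eps -> regular_normal C x v -> approx_geodesic C eps x x' gamma ->
  dotv v (x' - x) <= eps * enorm v * enorm (x' - x).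
Proof.
move=> eps_ge0 v_normal [Cgamma _ _ near_segment].
set d := x' - x; have d_ge0 := enorm_ge0 d; have v_ge0 := enorm_ge0 v.
apply/ler_addgt0Pr => e e_gt0.
(* along gamma, |gamma t - x| <= t K, so regularity with tolerance e / K gains at most e t *)
pose K := (1 + eps) * enorm d + 1.
have K_gt0 : 0 < K by rewrite /K; nra.
have [delta [delta_gt0 v_regular]] := v_normal (e / K) (divr_gt0 e_gt0 K_gt0).
have dK_gt0 : 0 < delta + K by rewrite addr_gt0.
pose t := delta / (delta + K).
have t_gt0 : 0 < t by rewrite divr_gt0.
have tK_lt_delta : t * K < delta.
  by rewrite /t mulrAC ltr_pdivrMr // ltr_pM2l // ltrDr.
have t01 : `[0, 1]%classic t.
  by rewrite /= in_itv /= (ltW t_gt0) ler_pdivrMr // mul1r lerDl (ltW K_gt0).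
set r := gamma t - (x + t *: d).
have r_le : enorm r <= eps * t * enorm d := near_segment t t01.
have gamma_t : gamma t - x = t *: d + r by rewrite [RHS]addrC /r opprD addrA subrK.
have gamma_t_le : enorm (gamma t - x) <= t * K.
  rewrite gamma_t; apply: le_trans (enormD _ _) _.
  rewrite enormZ ger0_norm ?ltW // /K; nra.
have dot_gamma_t : dotv v (gamma t - x) <= e * t.
  apply: le_trans (v_regular _ (Cgamma t t01) (le_lt_trans gamma_t_le tK_lt_delta)) _.
  rewrite -ler_pdivlMl ?divr_gt0 // invf_div mulrA divfK ?gt_eqF //.
  by rewrite mulrC.
have dot_r : - dotv v r <= enorm v * (eps * t * enorm d).
  rewrite -dotvNr; apply: le_trans (cauchy_schwarz _ _) _.
  by rewrite enormN ler_wpM2l.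
rewrite -(ler_pM2l t_gt0) -dotvZr.
have -> : dotv v (t *: d) = dotv v (gamma t - x) - dotv v r by rewrite gamma_t dotvDr addrK.
nra.
Qed.

Lemma eps_obtuse_on_limiting C W eps : open W ->
  eps_obtuse_on (regular_normal C) C W eps -> eps_obtuse_on (limiting_normal C) C W eps.
Proof.
move=> oW obtuse x x' v Cx Wx Cx' Wx' [xs [vs [Cxs vs_normal xs_x vs_v]]].
have lhs_cvg : (fun k => dotv (vs k) (x' - xs k)) @ \oo --> dotv v (x' - x).
  by apply: cvg_dotv => //; apply: cvgB => //; exact: cvg_cst.
have rhs_cvg : (fun k => eps * enorm (vs k) * enorm (x' - xs k)) @ \oo -->
    eps * enorm v * enorm (x' - x).
  apply: cvgM; first by apply: cvgM; [exact: cvg_cst | exact: cvg_enorm].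
  by apply: cvg_enorm; apply: cvgB => //; exact: cvg_cst.
apply: ler_cvg_to lhs_cvg rhs_cvg _.
near=> k; apply: obtuse => //; near: k.
by apply: xs_x; exact: open_nbhs_nbhs.
Unshelve. all: by end_near.
Qed.

Lemma regular_limiting_normal C x v :
  C x -> regular_normal C x v -> limiting_normal C x v.
Proof. by move=> Cx v_normal; exists (fun=> x), (fun=> v); split => //; exact: cvg_cst. Qed.

Lemma smoothly_approx_convex_super_regular C xbar :
  locally_closed C xbar -> smoothly_approx_convex C xbar -> super_regular C xbar.
Proof.
move=> lc /smoothly_approx_convex_geodesic sac; split => // eps eps_gt0.
have [W [xbarW geodesic]] := sac eps eps_gt0.
have [r r_gt0 ballW] := (nbhs_ballP _ _).1 xbarW.
exists (ball xbar r); split; first exact: nbhsx_ballx.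
apply: eps_obtuse_on_limiting; first exact: ball_open.
move=> x x' v Cx /ballW Wx Cx' /ballW Wx' v_normal.
have [gamma gamma_geodesic] := geodesic x x' Cx Wx Cx' Wx'.
exact: regular_normal_geodesic_le (ltW eps_gt0) v_normal gamma_geodesic.
Qed.

Lemma super_regular_clarke_regular C xbar :
  C xbar -> super_regular C xbar -> clarke_regular C xbar.
Proof.
move=> Cxbar [lc obtuse]; split => // v; split; last exact: regular_limiting_normal.
move=> v_normal eps eps_gt0.
have v1_gt0 : 0 < enorm v + 1 by rewrite ltr_wpDl ?enorm_ge0.
have [W [xbarW obtuseW]] := obtuse (eps / (enorm v + 1)) (divr_gt0 eps_gt0 v1_gt0).
have [r r_gt0 ballW] := (nbhs_ballP _ _).1 xbarW.
exists r; split => // x Cx x_near.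
have Wx : W x.
  apply: ballW; rewrite -ball_normE /= distrC.
  exact: le_lt_trans (mx_norm_le_enorm _) x_near.
apply: le_trans (obtuseW xbar x v Cxbar (nbhs_singleton xbarW) Cx Wx v_normal) _.
by rewrite ler_wpM2r ?enorm_ge0 // mulrAC ler_pdivrMr // ler_pM2l // lerDl ler01.
Qed.

End NormalCones.

Theorem proposition3p6 (R : realType) (n : nat) (C : set 'rV[R]_n) (xbar : 'rV[R]_n) :
  C xbar -> smoothly_approx_convex C xbar ->
  UAG C xbar /\
  (locally_closed C xbar -> super_regular C xbar /\ clarke_regular C xbar).
Proof.
move=> Cxbar sac; split; first exact: smoothly_approx_convex_UAG.
move=> lc; have sr : super_regular C xbar by exact: smoothly_approx_convex_super_regular.
by split; last exact: super_regular_clarke_regular.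
Qed.
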